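(* Let $\ell$ be a prime with $\ell\nmid p-1$, $\mathcal{O}$ the valuation ring of $\mathbb{Q}_\ell(\mu_{p-1})$, and $Y$ as in the context. For every character $\psi:\Delta\to\mathcal{O}^\times$, $$e_\psi\,\mathrm{BF}_{\mathcal{O}}(Y)\cong\mathcal{O}/\psi(p\theta)\mathcal{O}.$$ In particular, if $\psi$ is even and nontrivial, then $e_\psi\mathrm{BF}_{\mathcal{O}}(Y)\cong\mathcal{O}$.
   Context: Let $p$ be an odd prime, $\Delta=\mathrm{Gal}(\mathbb{Q}(\zeta_p)/\mathbb{Q})$, $\sigma_i:\zeta_p\mapsto\zeta_p^i$, $j=\sigma_{-1}$; $\psi$ is even if $\psi(j)=1$. $p\theta=-\sum_{i=1}^{p-1}i\sigma_i^{-1}\in\mathbb{Z}[\Delta]$, and $\psi$ is extended linearly to the group ring. Digraphs have incidence $e\mapsto(o(e),t(e))$; derived digraph $X(G,\alpha)$: vertices $V_X\times G$, edges $E_X\times G$, $o(e,\sigma)=(o(e),\sigma)$, $t(e,\sigma)=(t(e),\sigma\alpha(e))$, $G$ acting by left multiplication on the second coordinate. $X$ is the bouquet with $\frac{p-1}{2}p+1$ loops $e_0$, $e_{i,k}$ ($1\le k\le i\le p-1$), $\alpha(e_0)=\sigma_1$, $\alpha(e_{i,k})=\sigma_i^{-1}$, $Y=X(\Delta,\alpha)$. $\mathcal{A}_Y(w)=\sum_{o(\varepsilon)=w}t(\varepsilon)$, $\mathrm{BF}(Y)=\mathrm{coker}(\mathcal{I}-\mathcal{A}_Y)$ (a $\mathbb{Z}[\Delta]$-module),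 $\mathrm{BF}_{\mathcal{O}}(Y)=\mathcal{O}\otimes_{\mathbb{Z}_\ell}(\mathbb{Z}_\ell\otimes_{\mathbb{Z}}\mathrm{BF}(Y))$, and $e_\psi=\frac{1}{p-1}\sum_{\sigma\in\Delta}\psi(\sigma)\sigma^{-1}\in\mathcal{O}[\Delta]$. *)

From HB Require Import structures.
From mathcomp Require Import all_boot all_order all_algebra all_fingroup.
Set Implicit Arguments. Unset Strict Implicit. Unset Printing Implicit Defensive.
Import GRing.Theory.
Local Open Scope ring_scope.

(* sigma_i : zeta_p |-> zeta_p^i corresponds to the class of i in (Z/pZ)^x.      *)
Definition Delta (p : nat) : finGroupType := {unit 'F_p}.

Definition sigma (p i : nat) : Delta p := insubd (1%g : Delta p) (i%:R : 'F_p).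

Definition der_o (VX EX : Type) (G : finGroupType) (oX : EX -> VX)
  (e : EX * G) : VX * G := (oX e.1, e.2).
Definition der_t (VX EX : Type) (G : finGroupType) (tX : EX -> VX)
  (alpha : EX -> G) (e : EX * G) : VX * G := (tX e.1, (e.2 * alpha e.1)%g).

(* The bouquet X: one vertex, loops e_0 (= None) and e_{i,k} (= Some (i,k)),
   1 <= k <= i <= p-1. *)
Definition VX : finType := unit.
Definition EX (p : nat) : finType :=
  option {ik : 'I_p * 'I_p | (0 < ik.2 <= ik.1)%N}.
Definition oX (p : nat) (e : EX p) : VX := tt.
Definition tX (p : nat) (e : EX p) : VX := tt.
Definition alphaX (p : nat) (e : EX p) : Delta p :=
  match e with
  | None => sigma p 1
  | Some ik => ((sigma p (val ik).1)^-1)%g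
  end.

Definition VY (p : nat) : finType := (VX * Delta p)%type.
Definition EY (p : nat) : finType := (EX p * Delta p)%type.
Definition oY (p : nat) : EY p -> VY p := der_o (@oX p).
Definition tY (p : nat) : EY p -> VY p := der_t (@tX p) (@alphaX p).

(* An element x of R[V_Y] is its coefficient function: x = sum_v x(v) v. *)
Definition adjY (R : nzRingType) (p : nat) (x : {ffun VY p -> R}) : {ffun VY p -> R} :=
  [ffun v => \sum_(eps : EY p) (if tY eps == v then x (oY eps) else 0)].
(* A_Y(w) = sum_{o(eps)=w} t(eps), extended linearly. *)

(* image of I - A_Y in R[V_Y]; BF_R(Y) = R[V_Y] / (this submodule) *)
Definition imIA (R : nzRingType) (p : nat) (x : {ffun VY p -> R}) : Prop :=
  exists y : {ffun VY p -> R}, x = y - adjY y.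

(* an element of R[Delta] is its coefficient function *)
Definition gr_of (R : nzRingType) (p : nat) (s : Delta p) : {ffun Delta p -> R} :=
  [ffun t => (t == s)%:R].

(* action of R[Delta] on R[V_Y] induced by left multiplication on the
   second coordinate: tau . (v, s) = (v, tau s). *)
Definition gr_act (R : nzRingType) (p : nat) (a : {ffun Delta p -> R})
  (x : {ffun VY p -> R}) : {ffun VY p -> R} :=
  [ffun u => \sum_(t : Delta p) a t * x (u.1, (t^-1 * u.2)%g)].

Definition ptheta (p : nat) : {ffun Delta p -> int} :=
  - \sum_(1 <= i < p) (gr_of int ((sigma p i)^-1)%g) *~ i.

Definition psi_lin (R : nzRingType) (p : nat) (psi : Delta p -> R)
  (x : {ffun Delta p -> int}) : R :=
  \sum_(s : Delta p) (x s)%:~R * psi s.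

(* e_psi = 1/(p-1) sum_s psi(s) s^{-1}; coefficient at t is psi(t^{-1})/(p-1) *)
Definition e_psi (R : unitRingType) (p : nat) (psi : Delta p -> R) : {ffun Delta p -> R} :=
  [ffun t => (p.-1)%:R^-1 * psi (t^-1)%g].

Definition is_character (R : unitRingType) (p : nat) (psi : Delta p -> R) : Prop :=
  (forall s, psi s \is a GRing.unit) /\ (forall s t, psi (s * t)%g = psi s * psi t).

(* For submodules N1 <= W1 of M1 and N2 <= W2 of M2, W1/N1 ~= W2/N2 as R-modules:
   there is an R-linear bijection W1/N1 -> W2/N2, given here by a lift F of it on
   representatives (any such map has a lift by choice, and conversely any F with
   the properties below induces an R-linear bijection). *)
Definition subquot_iso (R : nzRingType) (M1 M2 : lmodType R)
  (W1 N1 : M1 -> Prop) (W2 N2 : M2 -> Prop) : Prop :=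
  exists F : M1 -> M2,
  [/\ forall x, W1 x -> W2 (F x),
      forall x y, W1 x -> W1 y -> N1 (x - y) -> N2 (F x - F y),
      forall (a : R) x y, W1 x -> W1 y -> N2 (F (a *: x + y) - (a *: F x + F y)),
      forall x, W1 x -> N2 (F x) -> N1 x &
      forall y, W2 y -> exists2 x, W1 x & N2 (F x - y)].

Definition ldvd (O : nzRingType) (l n : nat) (x : O) : Prop :=
  exists y : O, x = (l%:R) ^+ n * y.

(* O is (up to isomorphism) the valuation ring of Q_l(mu_m): a complete discrete
   valuation ring with uniformizer l, containing a primitive m-th root of unity
   zeta whose residue class generates the residue field over F_l.
   (With l not dividing m, this characterizes O = Z_l[mu_m] = W(F_l(mu_m)).) *)
Definition is_val_ring_Ql_mu (O : idomainType) (l m : nat) (zeta : O) : Prop :=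
  [/\ (l%:R : O) != 0 /\ (l%:R : O) \isn't a GRing.unit,
      forall x : O, x != 0 -> exists n (u : O), u \is a GRing.unit /\ x = u * l%:R ^+ n,
      forall a : nat -> O, (forall n, ldvd l n (a n.+1 - a n)) ->
        exists x : O, forall n, ldvd l n (x - a n),
      m.-primitive_root zeta &
      forall x : O, exists s : seq int,
        ldvd l 1 (x - \sum_(i < size s) (s`_i)%:~R * zeta ^+ i)].

(* the submodule e_psi BF_O(Y) of BF_O(Y), through its preimage in O[V_Y] *)
Definition ePsiBF (O : idomainType) (p : nat) (psi : Delta p -> O)
  (x : {ffun VY p -> O}) : Prop :=
  exists m : {ffun VY p -> O}, imIA (x - gr_act (e_psi psi) m).

Definition idealO (O : idomainType) (c : O) (y : O^o) : Prop :=
  exists z : O, y = c * z.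

(* Let F x = sum_u psi(u.2) x(u) be the psi-coordinate on O[V_Y] and E = e_psi (tt, 1).
   Since Delta acts on Y by deck transformations, F (A y) = a F y and A E = a E, where
   a = sum_e psi(alpha e) = 1 - psi(p theta): the loops e_{i,k}, k <= i, contribute
   i psi(sigma_i^-1). As l does not divide p - 1, p - 1 is a unit of O, so e_psi m = F(m) E
   and F E = 1. Hence F maps e_psi O[V_Y] onto O and sends (I - A) y to psi(p theta) F y,
   which induces e_psi BF_O(Y) = O / psi(p theta) O. For psi even, the terms i and p - i of
   psi(p theta) carry the same character value, so 2 psi(p theta) = -p sum_s psi(s), which
   vanishes for psi nontrivial; and 2 != 0 in O because l is neither 0 nor a unit. *)

From HB Require Import structures.
From mathcomp Require Import all_boot all_order all_algebra all_fingroup.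
From mathcomp Require Import ring zify.
Set Implicit Arguments. Unset Strict Implicit. Unset Printing Implicit Defensive.
Import GRing.Theory.
Local Open Scope ring_scope.

Section DeltaRepresentatives.

Variables (p : nat) (p_pr : prime p).

Definition Delta_rep (s : Delta p) : nat := val s : 'F_p.

Lemma val_sigma i : ~~ (p %| i)%N -> val (sigma p i) = i%:R.
Proof.
move=> p_ndvd_i; rewrite /sigma insubdK // unfold_in unitfE.
apply: contra p_ndvd_i => /eqP/(congr1 (fun x : 'F_p => nat_of_ord x)).
by rewrite val_Fp_nat // => /eqP.
Qed.

Lemma Delta_rep_bounds s : (0 < Delta_rep s < p)%N.
Proof.
have s_neq0 : (val s : 'F_p) != 0 by rewrite -unitfE (valP s).
by rewrite lt0n s_neq0 /Delta_rep -[X in (_ < X)%N](card_Fp p_pr) card_ord ltn_ord.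
Qed.

Lemma Delta_repK : cancel Delta_rep (sigma p).
Proof.
move=> s; have /andP[s_gt0 s_lt_p] := Delta_rep_bounds s.
by apply: val_inj; rewrite val_sigma ?gtnNdvd // /Delta_rep natr_Zp.
Qed.

Lemma sigmaK i : (0 < i < p)%N -> Delta_rep (sigma p i) = i.
Proof.
move=> /andP[i_gt0 i_lt_p].
by rewrite /Delta_rep val_sigma ?gtnNdvd // val_Fp_nat // modn_small.
Qed.

Lemma sum_Delta (V : nmodType) (F : Delta p -> V) :
  \sum_(s : Delta p) F s = \sum_(1 <= i < p) F (sigma p i).
Proof.
rewrite -(eq_bigr _ (fun s _ => congr1 F (Delta_repK s))).
rewrite -(big_image _ _ Delta_rep predT (fun i => F (sigma p i))); apply: perm_big.
apply: uniq_perm.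
- by rewrite map_inj_uniq ?enum_uniq //; exact: can_inj Delta_repK.
- exact: iota_uniq.
- move=> i; rewrite mem_index_iota; apply/imageP/idP => [[s _ ->]|i_bd].
    exact: Delta_rep_bounds.
  by exists (sigma p i); rewrite ?sigmaK.
Qed.

Lemma sigma1 : sigma p 1 = 1%g.
Proof. by apply: val_inj; rewrite val_sigma // gtnNdvd ?prime_gt1. Qed.

Lemma sigmaN i : (0 < i < p)%N -> sigma p (p - i) = (sigma p p.-1 * sigma p i)%g.
Proof.
move=> /andP[i_gt0 i_lt_p]; have p_gt1 := prime_gt1 p_pr.
apply: val_inj; rewrite FinRing.val_unitM !val_sigma ?gtnNdvd //; try lia.
by rewrite natrB ?(ltnW i_lt_p) // -subn1 natrB ?prime_gt0 // pchar_Fp_0 //; ring.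
Qed.

End DeltaRepresentatives.

Section Characters.

Variables (R : unitRingType) (p : nat) (psi : Delta p -> R).
Hypothesis psi_char : is_character psi.

Lemma is_characterM s t : psi (s * t)%g = psi s * psi t.
Proof. by case: psi_char. Qed.

Lemma is_character1 : psi 1%g = 1.
Proof.
case: psi_char => psi_unit _; apply: (mulrI (psi_unit 1%g)).
by rewrite -is_characterM mulg1 mulr1.
Qed.

Lemma is_characterV s : psi s * psi (s^-1)%g = 1.
Proof. by rewrite -is_characterM mulgV is_character1. Qed.

End Characters.

Lemma sum_char_nontriv (O : idomainType) p (psi : Delta p -> O) :
  is_character psi -> (exists s, psi s != 1) -> \sum_(s : Delta p) psi s = 0.
Proof.
move=> psi_char [t psi_t_neq1].
have sum_invariant : \sum_(s : Delta p) psi s = psi t * \sum_(s : Delta p) psi s.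
  rewrite mulr_sumr (reindex_inj (mulgI t)) /=.
  by apply: eq_bigr => s _; rewrite (is_characterM psi_char).
have : (psi t - 1) * \sum_(s : Delta p) psi s = 0.
  by rewrite mulrBl mul1r -sum_invariant subrr.
by move/eqP; rewrite mulf_eq0 subr_eq0 (negbTE psi_t_neq1) => /eqP.
Qed.

Lemma psi_lin_ptheta (R : nzRingType) p (psi : Delta p -> R) :
  psi_lin psi (ptheta p) = - \sum_(1 <= i < p) i%:R * psi ((sigma p i)^-1)%g.
Proof.
rewrite /psi_lin /ptheta.
under eq_bigr do rewrite ffunE sum_ffunE rmorphN /= mulNr rmorph_sum /= mulr_suml.
rewrite sumrN exchange_big /=; congr (- _); apply: eq_bigr => i _.
rewrite (bigD1 ((sigma p i)^-1)%g) //= big1 ?addr0 => [|s /negbTE s_neq].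
  by rewrite ffunMzE ffunE eqxx intz.
by rewrite ffunMzE ffunE s_neq mul0rz mul0r.
Qed.

Lemma psi_lin_ptheta_even (O : idomainType) p (psi : Delta p -> O) :
  prime p -> is_character psi -> psi (sigma p p.-1) = 1 ->
  (exists s, psi s != 1) -> 2%:R != 0 :> O -> psi_lin psi (ptheta p) = 0.
Proof.
move=> p_pr psi_char psi_even psi_nontriv two_neq0.
pose g i := psi ((sigma p i)^-1)%g.
have sum_g : \sum_(1 <= i < p) g i = 0.
  rewrite /g -(sum_Delta p_pr (fun s => psi s^-1)%g) (reindex_inj invg_inj) /=.
  by under eq_bigr do rewrite invgK; exact: sum_char_nontriv.
have g_sym i : (1 <= i < p)%N -> g (p - i)%N = g i.
  move=> i_bd; rewrite /g sigmaN // invgM (is_characterM psi_char).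
  by move: (is_characterV psi_char (sigma p p.-1)); rewrite psi_even mul1r => ->; rewrite mulr1.
rewrite psi_lin_ptheta; set S := \sum_(1 <= i < p) _; apply/eqP; rewrite oppr_eq0.
have S_rev : S = \sum_(1 <= i < p) (p - i)%:R * g i.
  rewrite /S big_nat_rev /=; apply: eq_big_nat => i i_bd.
  by rewrite -g_sym // subnBA ?(ltnW (andP i_bd).2) //; congr (_ * g _); lia.
have : 2%:R * S = 0.
  rewrite mulr_natl mulr2n {2}S_rev -big_split /=.
  rewrite (eq_big_nat _ _ (F2 := fun i => p%:R * g i)) -?mulr_sumr ?sum_g ?mulr0 //.
  by move=> i /andP[_ i_lt_p]; rewrite -mulrDl -natrD subnKC // ltnW.
by move/eqP; rewrite mulf_eq0 (negbTE two_neq0).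
Qed.

Lemma natr_unit_coprime (O : idomainType) (l m : nat) :
  coprime l m -> (l%:R : O) \isn't a GRing.unit ->
  (forall x : O, x != 0 -> exists n (u : O), u \is a GRing.unit /\ x = u * l%:R ^+ n) ->
  (m%:R : O) \is a GRing.unit.
Proof.
move=> co_lm l_nunit l_adic.
have [l0 | l_gt0] := posnP l.
  by move: co_lm; rewrite l0 /coprime gcd0n => /eqP->; rewrite unitr1.
have [a _ /divnK bezout] := Bezoutl m l_gt0; move: bezout.
rewrite (eqP co_lm); set b := (_ %/ l)%N => bezout.
have {}bezout : b%:R * l%:R = 1 + a%:R * m%:R :> O
  by move/(congr1 (fun n => n%:R : O)): bezout; rewrite natrD !natrM.
have l_ndvd_m q : m%:R <> l%:R * q :> O.
  move=> m_eq; move/negP: l_nunit; apply; apply/unitrPr; exists (b%:R - a%:R * q).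
  by rewrite mulrBr [_ * b%:R]mulrC bezout m_eq; ring.
have [/eqP m0 | m_neq0] := boolP (m%:R == 0 :> O).
  by case: (l_ndvd_m 0); rewrite m0 mulr0.
have [[|n] [u [u_unit m_eq]]] := l_adic _ m_neq0; first by rewrite m_eq mulr1.
by case: (l_ndvd_m (u * l%:R ^+ n)); rewrite m_eq exprS; ring.
Qed.

Lemma natr2_neq0 (R : unitRingType) (l : nat) :
  (l%:R : R) != 0 -> (l%:R : R) \isn't a GRing.unit -> 2%:R != 0 :> R.
Proof.
move=> l_neq0 l_nunit; apply: contraNneq l_neq0 => two0.
have := l_nunit; rewrite (divn_eq l 2) natrD natrM two0 mulr0 add0r.
by rewrite modn2; case: (odd l) => /=; rewrite ?mulr1n ?unitr1.
Qed.

Lemma sum_option (V : nmodType) (T : finType) (F : option T -> V) :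
  \sum_(e : option T) F e = F None + \sum_(x : T) F (Some x).
Proof.
rewrite (bigD1 None) //=; congr (_ + _).
rewrite (@reindex_omap _ _ _ _ _ (@Some T) id) //= => [|[]//].
by apply: eq_bigl => x; rewrite eqxx.
Qed.

Lemma sumr_const_ord_between (V : nmodType) n i (c : V) : (i < n)%N ->
  \sum_(k < n | (0 < k <= i)%N) c = c *+ i.
Proof.
move=> i_lt_n; rewrite -(big_mkord (fun k => (0 < k <= i)%N) (fun _ => c)).
rewrite -(big_nat_widen 0 i.+1 n (fun k => (0 < k)%N) (fun _ => c)) //.
rewrite big_mkcond big_ltn //= add0r (eq_big_nat _ _ (F2 := fun _ => c)).
  by rewrite sumr_const_nat subn1.
by move=> k /andP[k_gt0 _]; rewrite k_gt0.
Qed.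

Lemma sum_alphaX (V : nmodType) p (f : Delta p -> V) : prime p ->
  \sum_(e : EX p) f (alphaX e) = f 1%g + \sum_(1 <= i < p) f ((sigma p i)^-1)%g *+ i.
Proof.
move=> p_pr; rewrite sum_option /= sigma1 //; congr (_ + _).
rewrite -(big_sub (fun ik : 'I_p * 'I_p => (0 < ik.2 <= ik.1)%N)
                  (fun ik => f ((sigma p ik.1)^-1)%g)).
rewrite -(pair_big_dep xpredT (fun (i k : 'I_p) => (0 < k <= i)%N)
                       (fun i _ => f ((sigma p i)^-1)%g)) /=.
under eq_bigr => i _ do rewrite sumr_const_ord_between //.
by rewrite -(big_mkord xpredT (fun i => f ((sigma p i)^-1)%g *+ i)) big_ltn ?prime_gt0 // add0r.
Qed.

Lemma sum_VY (V : nmodType) p (F : VY p -> V) :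
  \sum_(u : VY p) F u = \sum_(w : Delta p) F (tt, w).
Proof.
rewrite (eq_bigr (fun u => F (u.1, u.2))); last by case.
rewrite -(pair_big xpredT xpredT (fun i j => F (i, j))) /=.
by rewrite (big_pred1 tt) //; case.
Qed.

Lemma adjYE (R : nzRingType) p (y : {ffun VY p -> R}) w :
  adjY y (tt, w) = \sum_(e : EX p) y (tt, (w * (alphaX e)^-1)%g).
Proof.
rewrite ffunE -(pair_big xpredT xpredT (fun (e : EX p) (s : Delta p) =>
   if (tt, (s * alphaX e)%g) == (tt, w) then y (tt, s) else 0)) /=.
apply: eq_bigr => e _; rewrite -big_mkcond (big_pred1 (w * (alphaX e)^-1)%g) // => s /=.
by rewrite xpair_eqE /=; apply/eqP/eqP => [<-|->]; rewrite ?mulgK ?mulgVK.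
Qed.

Lemma adjY_is_zmod_morphism (R : nzRingType) p : zmod_morphism (@adjY R p).
Proof.
move=> x y; apply/ffunP => -[[] w].
rewrite [RHS]ffunE [X in _ = _ + X]ffunE !adjYE -sumrB.
by apply: eq_bigr => e _; rewrite !ffunE.
Qed.

HB.instance Definition _ (R : nzRingType) p :=
  GRing.isZmodMorphism.Build _ _ (@adjY R p) (@adjY_is_zmod_morphism R p).

Definition char_form (R : comNzRingType) p (psi : Delta p -> R)
    (x : {ffun VY p -> R}) : R :=
  \sum_(u : VY p) psi u.2 * x u.

Lemma char_form_is_zmod_morphism (R : comNzRingType) p (psi : Delta p -> R) :
  zmod_morphism (char_form psi).
Proof.
by move=> x y; rewrite /char_form -sumrB; apply: eq_bigr => u _; rewrite !ffunE mulrBr.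
Qed.

HB.instance Definition _ (R : comNzRingType) p (psi : Delta p -> R) :=
  GRing.isZmodMorphism.Build _ _ (char_form psi) (char_form_is_zmod_morphism psi).

Section PsiComponent.

Variables (O : idomainType) (p : nat) (psi : Delta p -> O).
Hypotheses (p_pr : prime p) (psi_char : is_character psi).

(* The image of the vertex (tt, 1) under e_psi. *)
Definition char_vec : {ffun VY p -> O} := [ffun u => p.-1%:R^-1 * psi (u.2^-1)%g].

Definition adj_eigenvalue : O := \sum_(e : EX p) psi (alphaX e).

Lemma char_formE x : char_form psi x = \sum_(w : Delta p) psi w * x (tt, w).
Proof. exact: sum_VY. Qed.

Lemma char_formZ a (x : {ffun VY p -> O}) :
  char_form psi [ffun u => a * x u] = a * char_form psi x.
Proof. by rewrite /char_form mulr_sumr; apply: eq_bigr => u _; rewrite ffunE mulrCA. Qed.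

Lemma char_form_adjY y : char_form psi (adjY y) = adj_eigenvalue * char_form psi y.
Proof.
rewrite char_formE /adj_eigenvalue mulr_suml.
under eq_bigr do rewrite adjYE mulr_sumr.
rewrite exchange_big /=; apply: eq_bigr => e _.
rewrite char_formE mulr_sumr (reindex_inj (mulIg (alphaX e))) /=.
by apply: eq_bigr => s _; rewrite mulgK (is_characterM psi_char) mulrCA mulrA.
Qed.

Lemma adjY_char_vec d :
  adjY [ffun u => d * char_vec u] = [ffun u => adj_eigenvalue * d * char_vec u].
Proof.
apply/ffunP => -[[] w]; rewrite adjYE ffunE /adj_eigenvalue !mulr_suml.
apply: eq_bigr => e _; rewrite !ffunE /= invgM invgK (is_characterM psi_char).
by ring.
Qed.

Lemma gr_act_e_psi m : gr_act (e_psi psi) m = [ffun u => char_form psi m * char_vec u].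
Proof.
apply/ffunP => -[[] w]; rewrite !ffunE /= char_formE mulr_suml.
have inj_w : injective (fun s : Delta p => w * s^-1)%g by move=> s t /mulgI/invg_inj.
rewrite (reindex_inj inj_w); apply: eq_bigr => s _.
by rewrite ffunE /= invgM invgK mulgVK (is_characterM psi_char); ring.
Qed.

Lemma char_form_char_vec : (p.-1%:R : O) \is a GRing.unit -> char_form psi char_vec = 1.
Proof.
move=> p1_unit; rewrite char_formE.
under eq_bigr do rewrite ffunE /= mulrCA (is_characterV psi_char) mulr1.
by rewrite sum_Delta // sumr_const_nat subn1 -[LHS]mulr_natr mulVr.
Qed.

Lemma adj_eigenvalueE : adj_eigenvalue = 1 - psi_lin psi (ptheta p).
Proof.
rewrite /adj_eigenvalue sum_alphaX // is_character1 // psi_lin_ptheta opprK.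
by congr (_ + _); apply: eq_bigr => i _; rewrite mulr_natl.
Qed.

End PsiComponent.

Section PsiPartOfBowenFranks.

Variables (O : idomainType) (p : nat) (psi : Delta p -> O).
Hypotheses (p_pr : prime p) (psi_char : is_character psi).
Hypothesis p1_unit : (p.-1%:R : O) \is a GRing.unit.

Local Notation c := (psi_lin psi (ptheta p)).
Local Notation F := (char_form psi).
Local Notation E := (char_vec psi).

Lemma char_form_subadjY z : F (z - adjY z) = c * F z.
Proof. by rewrite raddfB /= char_form_adjY // adj_eigenvalueE //; ring. Qed.

Lemma char_form_scale_char_vec y : F [ffun u => y * E u] = y.
Proof. by rewrite char_formZ char_form_char_vec // mulr1. Qed.

Lemma ePsiBF_scale_char_vec y : ePsiBF psi [ffun u => y * E u].
Proof.
exists [ffun u => y * E u]; exists 0.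
by rewrite gr_act_e_psi // char_form_scale_char_vec raddf0 !subrr.
Qed.

Lemma char_form_imIA x : imIA x -> idealO c (F x).
Proof. by case=> z ->; exists (F z); rewrite char_form_subadjY. Qed.

Lemma imIA_char_form x : ePsiBF psi x -> idealO c (F x) -> imIA x.
Proof.
case=> m [z x_eq] [k Fx_eq].
have {}x_eq : x = [ffun u => F m * E u] + (z - adjY z).
  by rewrite -gr_act_e_psi // -x_eq addrC subrK.
have Fm_eq : F m = c * (k - F z).
  move: Fx_eq; rewrite x_eq raddfD /= char_form_scale_char_vec char_form_subadjY.
  by rewrite mulrBr => <-; ring.
exists ([ffun u => (k - F z) * E u] + z).
rewrite raddfD /= adjY_char_vec // adj_eigenvalueE // x_eq Fm_eq.
by apply/ffunP => u; rewrite !ffunE; ring.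
Qed.

Lemma psi_part_iso :
  subquot_iso (M1 := {ffun VY p -> O^o}) (M2 := O^o)
    (ePsiBF psi) (@imIA O p) (fun _ => True) (idealO c).
Proof.
exists F; split=> //.
- by move=> x y _ _ /char_form_imIA; rewrite raddfB.
- move=> a x y _ _; exists 0.
  have -> : a *: x + y = [ffun u => a * x u] + y by apply/ffunP => u; rewrite !ffunE.
  by rewrite raddfD /= char_formZ subrr mulr0.
- exact: imIA_char_form.
- move=> y _; exists [ffun u => y * E u]; first exact: ePsiBF_scale_char_vec.
  by exists 0; rewrite char_form_scale_char_vec subrr mulr0.
Qed.

End PsiPartOfBowenFranks.

Lemma subquot_iso_eqN2 (R : nzRingType) (M1 M2 : lmodType R)
    (W1 N1 : M1 -> Prop) (W2 N2 N2' : M2 -> Prop) :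
  (forall y, N2 y <-> N2' y) -> subquot_iso W1 N1 W2 N2 -> subquot_iso W1 N1 W2 N2'.
Proof.
move=> eqN [f [fW fN fZ fK fS]]; exists f; split=> //.
- by move=> x y Wx Wy /fN/eqN; apply.
- by move=> a x y Wx Wy; apply/eqN/fZ.
- by move=> x Wx /eqN; apply: fK.
- by move=> y /fS[x Wx /eqN]; exists x.
Qed.

Unset Implicit Arguments.

Theorem theorem5p11 (p l : nat) (O : idomainType) (zeta : O) (psi : Delta p -> O) :
  prime p -> odd p -> prime l -> ~~ (l %| p.-1)%N ->
  is_val_ring_Ql_mu l p.-1 zeta ->
  is_character psi ->
  subquot_iso (M1 := {ffun VY p -> O^o}) (M2 := O^o)
    (ePsiBF psi) (@imIA O p) (fun _ => True) (idealO (psi_lin psi (ptheta p)))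
  /\
  (psi (sigma p p.-1) = 1 -> (exists s, psi s != 1) ->
   subquot_iso (M1 := {ffun VY p -> O^o}) (M2 := O^o)
    (ePsiBF psi) (@imIA O p) (fun _ => True) (fun y : O^o => y = 0)).
Proof.
move=> p_pr _ l_pr l_ndvd [[l_neq0 l_nunit] l_adic _ _ _] psi_char.
have p1_unit : (p.-1%:R : O) \is a GRing.unit.
  by apply: natr_unit_coprime l_nunit l_adic; rewrite prime_coprime.
have iso := psi_part_iso p_pr psi_char p1_unit.
split=> // psi_even psi_nontriv.
have ptheta0 := psi_lin_ptheta_even p_pr psi_char psi_even psi_nontriv
                  (natr2_neq0 l_neq0 l_nunit).
apply: subquot_iso_eqN2 iso => y; rewrite ptheta0.
by split=> [[z ->]|->]; [rewrite mul0r | exists 0; rewrite mul0r].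
Qed.
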